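(* Let $N\ge1$, $k>0$, $\mathcal{E}>0$, $\gamma=\mathcal{E}/k$. Suppose $v_1,\dots,v_N$ are pairwise distinct nonzero numbers satisfying $$\frac{\mathcal{E}(1-v_k^2)+k(1-N)v_k}{k v_k^2}=\sum_{j\neq k}^{N}\frac{2}{v_j-v_k},\qquad k=1,\dots,N,$$ and put $E=-\frac{kN^2}{8}+\frac{\mathcal{E}}{2}\sum_{j=1}^N v_j$. Define $$\psi(x)=\exp(-\gamma\cosh x)\prod_{j=1}^N\big(e^{x/2}-v_je^{-x/2}\big),\qquad V(x)=\gamma^2\sinh^2x-(N+1)\gamma\cosh x.$$ Then $-\psi''(x)+V(x)\psi(x)=\frac{2E}{k}\,\psi(x)$ for all real $x$. *)

From Stdlib Require Import Reals.
From Coquelicot Require Import Coquelicot.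
Open Scope R_scope.

Fixpoint csum (n : nat) (f : nat -> C) : C :=
  match n with O => RtoC 0 | S m => Cplus (csum m f) (f m) end.
Fixpoint cprod (n : nat) (f : nat -> C) : C :=
  match n with O => RtoC 1 | S m => Cmult (cprod m f) (f m) end.

Definition bethe_eqs (N : nat) (k Ecal : R) (v : nat -> C) : Prop :=
  forall i, (i < N)%nat ->
    Cdiv (Cplus (Cmult (RtoC Ecal) (Cminus (RtoC 1) (Cmult (v i) (v i))))
                (Cmult (RtoC (k * (1 - INR N))) (v i)))
         (Cmult (RtoC k) (Cmult (v i) (v i)))
    = csum N (fun j => if Nat.eqb j i then RtoC 0
                       else Cdiv (RtoC 2) (Cminus (v j) (v i))).

Definition energy (N : nat) (k Ecal : R) (v : nat -> C) : C :=
  Cplus (RtoC (- (k * INR N ^ 2) / 8)) (Cmult (RtoC (Ecal / 2)) (csum N v)).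

Definition psi (N : nat) (gam : R) (v : nat -> C) (x : R) : C :=
  Cmult (RtoC (exp (- gam * cosh x)))
        (cprod N (fun j => Cminus (RtoC (exp (x / 2))) (Cmult (v j) (RtoC (exp (- x / 2)))))).

Definition pot (N : nat) (gam : R) (x : R) : R :=
  gam ^ 2 * (sinh x) ^ 2 - (INR N + 1) * gam * cosh x.

(* Put z = e^x.  Then psi(x) = A(x) Q(z) with A(x) = exp(-gam cosh x - N x/2)
   and Q = prod_j (X - v_j), and d/dx acts on polynomials in z as the Euler
   operator z d/dz.  Hence -psi'' + V psi - (2E/k) psi = A(x) W(z) for a
   polynomial W built from Q, Q' and Q''.  The coefficients of z^(N+1) and z^N
   in W cancel, the latter because E involves the sum of the roots, so W has
   degree < N.  At a root v_i of Q, W(v_i) is a multiple of the i-th Bethe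
   equation, hence zero; having N distinct roots, W is zero. *)

From Stdlib Require Import Reals Lra.
From Coquelicot Require Import Coquelicot.
From HB Require Import structures.
From mathcomp Require Import all_boot all_algebra Rstruct ring.

Set Implicit Arguments.
Unset Strict Implicit.
Unset Printing Implicit Defensive.
Import GRing.Theory Num.Theory.

HB.instance Definition _ := Choice.copy C (R * R)%type.

Lemma Cplus_opp_l : left_inverse (RtoC 0) Copp Cplus.
Proof. by move=> x; rewrite Cplus_comm Cplus_opp_r. Qed.

HB.instance Definition _ :=
  GRing.isZmodule.Build C Cplus_assoc Cplus_comm Cplus_0_l Cplus_opp_l.

Lemma C1_neq0 : RtoC 1 != RtoC 0.
Proof. exact/eqP/C1_nz. Qed.

HB.instance Definition _ := GRing.Zmodule_isComNzRing.Build C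
  Cmult_assoc Cmult_comm Cmult_1_l Cmult_plus_distr_r C1_neq0.

Lemma Cinv_l_neq0 (x : C) : x != 0%R -> (Cinv x * x)%R = 1%R.
Proof. by move=> /eqP; exact: Cinv_l. Qed.

Lemma Cinv0 : Cinv (RtoC 0) = RtoC 0.
Proof. by rewrite /Cinv /= Rmult_0_l Rdiv_0_l Ropp_0 Rdiv_0_l. Qed.

HB.instance Definition _ := GRing.ComNzRing_isField.Build C Cinv_l_neq0 Cinv0.

Lemma RtoC_is_zmod_morphism : zmod_morphism RtoC.
Proof. by move=> x y; rewrite RtoC_minus. Qed.

Lemma RtoC_is_monoid_morphism : monoid_morphism RtoC.
Proof. by split=> // x y; rewrite RtoC_mult. Qed.

HB.instance Definition _ :=
  GRing.isZmodMorphism.Build R C RtoC RtoC_is_zmod_morphism.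
HB.instance Definition _ :=
  GRing.isMonoidMorphism.Build R C RtoC RtoC_is_monoid_morphism.

Lemma CplusE (a b : C) : Cplus a b = (a + b)%R. Proof. by []. Qed.
Lemma CoppE (a : C) : Copp a = (- a)%R. Proof. by []. Qed.
Lemma CminusE (a b : C) : Cminus a b = (a - b)%R. Proof. by []. Qed.
Lemma CmultE (a b : C) : Cmult a b = (a * b)%R. Proof. by []. Qed.
Lemma CdivE (a b : C) : Cdiv a b = (a / b)%R. Proof. by []. Qed.

(* From Coquelicot's operations on C and the standard library's on R to the
   MathComp ring operations, on which [ring] and [field] work. *)
Definition CE := (CplusE, CoppE, CminusE, CmultE, CdivE).
Definition RE := (R0E, R1E, IZRposE, INRE,
                  RplusE, RminusE, RmultE, RoppE, RdivE, RinvE, RpowE).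
Definition RtoCE := (rmorph0, rmorph1, rmorphD, rmorphN, rmorphB, rmorphM,
                     fmorphV, fmorph_div, rmorphXn, rmorph_nat).

Lemma csumE (n : nat) (f : nat -> C) :
  csum n f = (\sum_(0 <= j < n) f j)%R.
Proof. by elim: n => [|n IH]; [rewrite big_geq | rewrite big_nat_recr //= IH]. Qed.

Lemma cprodE (n : nat) (f : nat -> C) :
  cprod n f = (\prod_(0 <= j < n) f j)%R.
Proof. by elim: n => [|n IH]; [rewrite big_geq | rewrite big_nat_recr //= IH]. Qed.

Section EulerOperator.

Local Open Scope ring_scope.
Variable F : fieldType.
Implicit Types (p q Q : {poly F}) (a g s : F).

Definition euler p : {poly F} := 'X * p^`().

Lemma coef_euler p j : (euler p)`_j = p`_j *+ j.
Proof. by rewrite /euler coefXM coef_deriv; case: j => [|j] //=; rewrite mulr0n. Qed.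

Lemma horner_euler p a : (euler p).[a] = a * p^`().[a].
Proof. by rewrite /euler hornerM hornerX. Qed.

Lemma horner_euler2 p a :
  (euler (euler p)).[a] = a * p^`().[a] + a ^+ 2 * p^`()^`().[a].
Proof.
rewrite horner_euler /euler derivM derivX mul1r hornerD hornerM hornerX.
by rewrite mulrDr mulrA -expr2.
Qed.

(* For psi(x) = A(x) Q(e^x), this is the W with
   -psi'' + V psi - (g s - N^2/4) psi = A(x) W(e^x) (see [schrodinger_residual]). *)
Definition schrodinger_poly (N : nat) g s Q : {poly F} :=
  - euler (euler Q) + euler Q *+ N + g *: ('X * euler Q) - g *: Q^`()
  - g *: ('X * Q) *+ N - (g * s) *: Q.

Lemma coef_schrodinger_poly N g s Q j :
  (schrodinger_poly N g s Q)`_j.+1 =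
    - Q`_j.+1 *+ j.+1 *+ j.+1 + Q`_j.+1 *+ j.+1 *+ N + g * Q`_j *+ j
    - g * Q`_j.+2 *+ j.+2 - g * Q`_j *+ N - g * s * Q`_j.+1.
Proof.
rewrite /schrodinger_poly !(coefB, coefD, coefN, coefMn, coefZ) !coef_euler.
by rewrite !coefXM /= !coef_deriv; case: j => [|j] /=; rewrite ?coef_deriv; ring.
Qed.

Lemma size_schrodinger_poly n g s Q :
  (size Q <= n.+2)%N -> Q`_n = - s * Q`_n.+1 ->
  (size (schrodinger_poly n.+1 g s Q) <= n.+1)%N.
Proof.
move=> szQ Qn; apply/leq_sizeP => [[//|j]]; rewrite ltnS => le_nj.
have Q0 i : (n.+2 <= i)%N -> Q`_i = 0.
  by move=> le_i; rewrite nth_default // (leq_trans szQ le_i).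
rewrite coef_schrodinger_poly.
move: le_nj; rewrite leq_eqVlt => /predU1P[<- | ].
  by rewrite (Q0 n.+2) // Qn; ring.
rewrite leq_eqVlt => /predU1P[<- | lt_j].
  by rewrite (Q0 n.+2) ?(Q0 n.+3) //; ring.
by rewrite (Q0 _ lt_j) (Q0 _ (leqW lt_j)) (Q0 _ (leqW (leqW lt_j))); ring.
Qed.

Lemma horner_schrodinger_poly_factor N g s a q :
  (schrodinger_poly N g s (('X - a%:P) * q)).[a] =
    (g * (a ^+ 2 - 1) + (N%:R - 1) * a) * q.[a] - 2 * a ^+ 2 * q^`().[a].
Proof.
rewrite /schrodinger_poly !(hornerD, hornerN, hornerMn, hornerZ).
rewrite horner_euler2 !hornerM hornerX !derivM derivXsubC !mul1r derivD derivM.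
by rewrite derivXsubC mul1r !(hornerD, hornerM, hornerN, hornerX, hornerC); ring.
Qed.

Lemma horner_deriv_prod_XsubC (I : eqType) (r : seq I) (P : pred I)
    (c : I -> F) a :
  {in r, forall i, P i -> a != c i} ->
  (\prod_(i <- r | P i) ('X - (c i)%:P))^`().[a] =
    (\prod_(i <- r | P i) ('X - (c i)%:P)).[a] * \sum_(i <- r | P i) (a - c i)^-1.
Proof.
elim: r => [_|i r IH a_neq]; first by rewrite !big_nil mulr0 -polyC1 derivC horner0.
have {}IH := IH (fun j j_in => a_neq j (@mem_behead _ (i :: r) j j_in)).
rewrite !big_cons; case: ifP => // Pi.
rewrite derivM derivXsubC hornerD !hornerM IH hornerXsubC hornerC.
have ai_neq0 : a - c i != 0 by rewrite subr_eq0 a_neq ?mem_head.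
by field.
Qed.

Lemma schrodinger_poly_bethe_root N g s a (I : eqType) (r : seq I) (P : pred I)
    (c : I -> F) :
  a != 0 -> {in r, forall i, P i -> a != c i} ->
  (g * (1 - a ^+ 2) + (1 - N%:R) * a) / a ^+ 2 =
    \sum_(i <- r | P i) 2 / (c i - a) ->
  (schrodinger_poly N g s (('X - a%:P) * \prod_(i <- r | P i) ('X - (c i)%:P))).[a]
    = 0.
Proof.
move=> a_neq0 a_neq bethe.
rewrite horner_schrodinger_poly_factor horner_deriv_prod_XsubC //.
set L := \sum_(i <- r | P i) _.
have sumE : \sum_(i <- r | P i) 2 / (c i - a) = - 2 * L.
  rewrite /L mulr_sumr; apply: eq_bigr => i _.
  by rewrite -[c i - a]opprB invrN mulrN mulNr.
have {}bethe : g * (1 - a ^+ 2) + (1 - N%:R) * a = - 2 * L * a ^+ 2.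
  by rewrite -sumE -bethe divfK ?expf_neq0.
rewrite (_ : g * (a ^+ 2 - 1) + (N%:R - 1) * a =
             - (g * (1 - a ^+ 2) + (1 - N%:R) * a)); last by ring.
by rewrite bethe; ring.
Qed.

Definition root_poly (N : nat) (v : nat -> F) : {poly F} :=
  \prod_(0 <= j < N) ('X - (v j)%:P).

Lemma size_root_poly N (v : nat -> F) : size (root_poly N v) = N.+1.
Proof. by rewrite size_prod_XsubC /index_iota subn0 size_iota. Qed.

Lemma coef_root_poly_lead N (v : nat -> F) : (root_poly N v)`_N = 1.
Proof.
by have := lead_coef_prod_XsubC (index_iota 0 N) predT v; rewrite /lead_coef size_root_poly.
Qed.

Lemma coef_root_poly_sub n (v : nat -> F) :
  (root_poly n.+1 v)`_n = - \sum_(0 <= j < n.+1) v j.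
Proof.
have := @coefPn_prod_XsubC F [seq v j | j <- index_iota 0 n.+1].
by rewrite size_map /index_iota subn0 size_iota !big_map; apply.
Qed.

Lemma schrodinger_poly_bethe_eq0 N g (v : nat -> F) :
  (0 < N)%N ->
  (forall i j, (i < N)%N -> (j < N)%N -> i <> j -> v i <> v j) ->
  (forall i, (i < N)%N -> v i != 0) ->
  (forall i, (i < N)%N ->
     (g * (1 - v i ^+ 2) + (1 - N%:R) * v i) / v i ^+ 2 =
       \sum_(0 <= j < N | j != i) 2 / (v j - v i)) ->
  schrodinger_poly N g (\sum_(0 <= j < N) v j) (root_poly N v) = 0.
Proof.
case: N => [//|n] _ v_inj v_neq0 bethe.
set W := schrodinger_poly _ _ _ _.
set rs := [seq v j | j <- index_iota 0 n.+1].
have uniq_rs : uniq rs.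
  rewrite map_inj_in_uniq ?iota_uniq // => i j.
  rewrite !mem_index_iota /= => lt_i lt_j vij.
  by case: (eqVneq i j) => // /eqP ij; case: (v_inj i j lt_i lt_j ij vij).
have size_W : (size W <= n.+1)%N.
  apply: size_schrodinger_poly; first by rewrite size_root_poly.
  by rewrite coef_root_poly_sub coef_root_poly_lead mulr1.
have roots_W : all (root W) rs.
  apply/allP => _ /mapP [i i_in ->].
  have lt_i : (i < n.+1)%N by rewrite mem_index_iota in i_in.
  rewrite /root /W /root_poly.
  rewrite [in X in schrodinger_poly _ _ _ X](bigD1_seq i) ?iota_uniq //.
  apply/eqP/schrodinger_poly_bethe_root; [exact: v_neq0 | | exact: bethe].
  move=> j; rewrite mem_index_iota => lt_j ji.
  by apply/eqP => vij; apply: (v_inj j i) => //; apply/eqP.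
apply/eqP; apply: contraLR size_W => W_neq0.
have := max_poly_roots W_neq0 roots_W uniq_rs.
by rewrite size_map /index_iota subn0 size_iota ltnNge.
Qed.

End EulerOperator.

Section ComplexDerivatives.

Local Open Scope ring_scope.

Lemma is_derive_RtoC_mul (f : R -> R) (g : R -> C) (x f' : R) (g' : C) :
  is_derive f x f' -> is_derive g x g' ->
  is_derive (fun t => RtoC (f t) * g t) x (RtoC f' * g x + RtoC (f x) * g').
Proof.
move=> df dg.
apply: (is_derive_ext (fun t => scal (f t) (g t))) => [t|]; first exact: scal_R_Cmult.
apply: filterdiff_ext_lin; first exact: filterdiff_scal_fct Rmult_comm df dg.
move=> y; rewrite !scal_R_Cmult -[plus _ _]/(_ + _ : C) -[scal y f']/(y * f')%R.
rewrite rmorphM !CE.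
(* [ring] needs the equation stated in [C], not in the normed module. *)
by apply: (@etrans C _ (RtoC y * (RtoC f' * g x + RtoC (f x) * g'))); [ring | ].
Qed.

Lemma is_derive_horner_exp (p : {poly C}) x :
  is_derive (fun t => p.[RtoC (exp t)]) x ((euler p).[RtoC (exp x)]).
Proof.
elim/poly_ind: p => [|p c IH].
  apply: (is_derive_ext (fun _ => zero : C_R_NormedModule)) => [t|].
    by rewrite horner0.
  by rewrite /euler deriv0 mulr0 horner0; exact: is_derive_const.
apply: (is_derive_ext (fun t => RtoC (exp t) * p.[RtoC (exp t)] + c)) => [t|].
  by rewrite hornerMXaddC mulrC.
have -> : (euler (p * 'X + c%:P)).[RtoC (exp x)] =
          RtoC (exp x) * p.[RtoC (exp x)] + RtoC (exp x) * (euler p).[RtoC (exp x)] + 0.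
  by rewrite !horner_euler derivMXaddC hornerD hornerMX; ring.
apply: is_derive_plus; last exact: is_derive_const.
by apply: is_derive_RtoC_mul => //; exact: is_derive_exp.
Qed.

Definition weighted (a : R -> R) (p : {poly C}) (t : R) : C :=
  (RtoC (a t) * p.[RtoC (exp t)])%R.

Lemma is_derive_weighted (a a' : R -> R) (p : {poly C}) x :
  is_derive a x (a' x) ->
  is_derive (weighted a p) x (weighted a' p x + weighted a (euler p) x).
Proof. by move=> da; apply: is_derive_RtoC_mul => //; exact: is_derive_horner_exp. Qed.

End ComplexDerivatives.

Section Gauge.

Local Open Scope R_scope.
Variables (N : nat) (gam : R).

Definition gauge (x : R) : R := exp (- gam * cosh x - INR N * x / 2).
Definition drift (x : R) : R := - gam * sinh x - INR N / 2.
Definition dgauge (x : R) : R := gauge x * drift x.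
Definition d2gauge (x : R) : R := gauge x * (drift x ^ 2 - gam * cosh x).

Lemma is_derive_gauge x : is_derive gauge x (dgauge x).
Proof.
rewrite /dgauge /gauge /drift; auto_derive => //.
by rewrite Rmult_comm; congr Rmult; rewrite !RE; ring.
Qed.

Lemma is_derive_drift x : is_derive drift x (- gam * cosh x).
Proof. by rewrite /drift; auto_derive => //; rewrite !RE; ring. Qed.

Lemma is_derive_dgauge x : is_derive dgauge x (d2gauge x).
Proof.
have -> : d2gauge x = dgauge x * drift x + gauge x * (- gam * cosh x).
  by rewrite /d2gauge /dgauge !RE; ring.
exact: Derive.is_derive_mult (is_derive_gauge x) (is_derive_drift x).
Qed.

Lemma exp_natmul (n : nat) (y : R) : exp (INR n * y) = exp y ^ n.
Proof.
elim: n => [|n IH]; first by rewrite Rmult_0_l exp_0.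
by rewrite S_INR Rmult_plus_distr_r Rmult_1_l exp_plus IH (Rmult_comm (exp y ^ n)).
Qed.

Lemma gaugeE x : gauge x = exp (- gam * cosh x) * exp (- x / 2) ^ N.
Proof. by rewrite /gauge -exp_natmul -exp_plus; congr exp; rewrite !RE; ring. Qed.

End Gauge.

Section Wavefunction.

Local Open Scope ring_scope.

Lemma natrC_neq0 n : (n.+1%:R : C) != 0.
Proof. by rewrite -(rmorph_nat RtoC) fmorph_eq0 pnatr_eq0. Qed.

Lemma psiE N gam v x :
  psi N gam v x = weighted (gauge N gam) (root_poly N v) x.
Proof.
rewrite /psi /weighted /root_poly cprodE horner_prod gaugeE CmultE.
rewrite RmultE RpowE rmorphM rmorphXn -mulrA -[X in _ ^+ X](subn0 N).
rewrite -prodr_const_nat -big_split /=; congr (_ * _); apply: eq_bigr => j _.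
have -> : exp (x / 2) = Rmult (exp (- x / 2)) (exp x).
  by rewrite -exp_plus; congr exp; rewrite !RE /=; field.
by rewrite hornerXsubC RmultE rmorphM !CE; ring.
Qed.

Definition dpsi N gam (Q : {poly C}) (t : R) : C :=
  (weighted (dgauge N gam) Q t + weighted (gauge N gam) (euler Q) t)%R.

Definition d2psi N gam (Q : {poly C}) (t : R) : C :=
  (weighted (d2gauge N gam) Q t + weighted (dgauge N gam) (euler Q) t
   + (weighted (dgauge N gam) (euler Q) t + weighted (gauge N gam) (euler (euler Q)) t))%R.

Lemma is_derive_weighted_gauge N gam Q x :
  is_derive (weighted (gauge N gam) Q) x (dpsi N gam Q x).
Proof. exact/is_derive_weighted/is_derive_gauge. Qed.

Lemma is_derive_dpsi N gam Q x : is_derive (dpsi N gam Q) x (d2psi N gam Q x).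
Proof.
apply: is_derive_plus; apply: is_derive_weighted;
  [exact: is_derive_dgauge | exact: is_derive_gauge].
Qed.

Lemma schrodinger_residual N gam s Q x :
  - d2psi N gam Q x + RtoC (pot N gam x) * weighted (gauge N gam) Q x =
    (RtoC (- INR N ^ 2 / 4) + RtoC gam * s) * weighted (gauge N gam) Q x
    + RtoC (gauge N gam x) * (schrodinger_poly N (RtoC gam) s Q).[RtoC (exp x)].
Proof.
have z_neq0 : RtoC (exp x) != 0 by rewrite fmorph_eq0; apply/eqP/Rgt_not_eq/exp_pos.
rewrite /d2psi /weighted /d2gauge /dgauge /drift /pot /schrodinger_poly.
rewrite !(hornerD, hornerN, hornerMn, hornerZ) !horner_euler2 !hornerM !hornerX.
rewrite /sinh /cosh exp_Ropp !RE !RtoCE /=.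
field; by rewrite z_neq0 ?(natrC_neq0 1) ?(natrC_neq0 3).
Qed.

Lemma energy_scaled N k Ecal v : k <> 0%R ->
  Cdiv (Cmult (RtoC 2) (energy N k Ecal v)) (RtoC k) =
    RtoC (- INR N ^ 2 / 4) + RtoC (Ecal / k) * \sum_(0 <= j < N) v j.
Proof.
move=> /eqP k_neq0; rewrite /energy csumE !CE !RE !RtoCE /=.
field; by rewrite fmorph_eq0 k_neq0 ?(natrC_neq0 1) ?(natrC_neq0 3) ?(natrC_neq0 7).
Qed.

Lemma bethe_eqsE N k Ecal v : k <> 0%R ->
  (forall i, (i < N)%N -> v i != 0) -> bethe_eqs N k Ecal v ->
  forall i, (i < N)%N ->
    (RtoC (Ecal / k) * (1 - v i ^+ 2) + (1 - N%:R) * v i) / v i ^+ 2 =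
      \sum_(0 <= j < N | j != i) 2 / (v j - v i).
Proof.
move=> /eqP k_neq0 v_neq0 bethe i lt_i.
have sumE : \sum_(0 <= j < N | j != i) 2 / (v j - v i) =
    csum N (fun j => if Nat.eqb j i then RtoC 0 else Cdiv (RtoC 2) (Cminus (v j) (v i))).
  rewrite csumE big_mkcond; apply: eq_bigr => j _.
  rewrite (sameP (Nat.eqb_spec j i) eqP) if_neg !CE !RE rmorph_nat.
  by case: eqP.
rewrite sumE -(bethe i (elimT ltP lt_i)) !CE !RE !RtoCE.
by field; rewrite fmorph_eq0 k_neq0 v_neq0.
Qed.

End Wavefunction.

Theorem mainTheorem5 (N : nat) (k Ecal : R) (v : nat -> C)
  (HN : Peano.le 1 N) (Hk : 0 < k) (HE : 0 < Ecal)
  (Hdist : forall i j, Peano.lt i N -> Peano.lt j N -> i <> j -> v i <> v j)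
  (Hnz : forall i, Peano.lt i N -> v i <> RtoC 0)
  (Hbethe : bethe_eqs N k Ecal v) :
  let gam := Ecal / k in
  exists psi1 psi2 : R -> C,
    (forall x : R, is_derive (psi N gam v) x (psi1 x)) /\
    (forall x : R, is_derive psi1 x (psi2 x)) /\
    (forall x : R,
       Cplus (Copp (psi2 x)) (Cmult (RtoC (pot N gam x)) (psi N gam v x))
       = Cmult (Cdiv (Cmult (RtoC 2) (energy N k Ecal v)) (RtoC k)) (psi N gam v x)).
Proof.
move=> gam.
have k_neq0 : k <> 0 by lra.
have v_neq0 i : (i < N)%N -> v i != 0%R by move=> /ltP lt_i; apply/eqP/Hnz.
have W0 : schrodinger_poly N (RtoC gam) (\sum_(0 <= j < N) v j)%R (root_poly N v) = 0%R.
  apply: schrodinger_poly_bethe_eq0 v_neq0 (bethe_eqsE k_neq0 v_neq0 Hbethe).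
    exact/leP.
  by move=> i j /ltP lt_i /ltP lt_j; exact: Hdist.
exists (dpsi N gam (root_poly N v)), (d2psi N gam (root_poly N v)).
split; [|split] => x.
- apply: (is_derive_ext (weighted (gauge N gam) (root_poly N v))) => [t|].
    by rewrite psiE.
  exact: is_derive_weighted_gauge.
- exact: is_derive_dpsi.
- rewrite psiE energy_scaled // !CE.
  by rewrite (schrodinger_residual _ _ (\sum_(0 <= j < N) v j)%R) W0 horner0 mulr0 addr0.
Qed.
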